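(* Let $E=E^\top\in\mathbb{R}^{n\times n}$ be positive definite, let $\alpha>0$, let $c_1,c_2\in\mathbb{R}^n$, and let $\mathcal{E}_\alpha=\{x\in\mathbb{R}^n : x^\top E x\leq\alpha^2\}$. Define $\phi(x)=x^\top Q x$ with $Q=\tfrac12(c_1c_2^\top+c_2c_1^\top)$. Let $W$ be either $(c_1^\top E^{-1}c_1)\,c_2c_2^\top$ or $(c_2^\top E^{-1}c_2)\,c_1c_1^\top$. Then $$\begin{bmatrix} x\\ \phi(x)\end{bmatrix}^\top\begin{bmatrix}\alpha^2 W & 0\\ 0 & -1\end{bmatrix}\begin{bmatrix} x\\ \phi(x)\end{bmatrix}\geq 0\quad\text{for all } x\in\mathcal{E}_\alpha,$$ i.e. $\phi(x)^2\leq \alpha^2 x^\top W x$ for all $x\in\mathcal{E}_\alpha$. *)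

From mathcomp Require Import all_boot all_order all_algebra.
From mathcomp Require Import reals.
Set Implicit Arguments. Unset Strict Implicit. Unset Printing Implicit Defensive.
Import Order.TTheory GRing.Theory Num.Theory.
Local Open Scope ring_scope.

Definition qform (R : pzRingType) (n : nat) (x : 'cV[R]_n) (A : 'M[R]_n) (y : 'cV[R]_n) : R :=
  (x^T *m A *m y) 0 0.

Definition posdef (R : numDomainType) (n : nat) (E : 'M[R]_n) : Prop :=
  E^T = E /\ forall x : 'cV[R]_n, x != 0 -> 0 < qform x E x.

Definition ellipsoid (R : numDomainType) (n : nat) (E : 'M[R]_n) (alpha : R) : pred 'cV[R]_n :=
  fun x => qform x E x <= alpha ^+ 2.

Definition Qmat (R : fieldType) (n : nat) (c1 c2 : 'cV[R]_n) : 'M[R]_n :=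
  2^-1 *: (c1 *m c2^T + c2 *m c1^T).

Definition phi (R : fieldType) (n : nat) (c1 c2 : 'cV[R]_n) (x : 'cV[R]_n) : R :=
  qform x (Qmat c1 c2) x.

Definition W1 (R : fieldType) (n : nat) (E : 'M[R]_n) (c1 c2 : 'cV[R]_n) : 'M[R]_n :=
  qform c1 (invmx E) c1 *: (c2 *m c2^T).
Definition W2 (R : fieldType) (n : nat) (E : 'M[R]_n) (c1 c2 : 'cV[R]_n) : 'M[R]_n :=
  qform c2 (invmx E) c2 *: (c1 *m c1^T).

From mathcomp Require Import all_boot all_order all_algebra.
From mathcomp Require Import reals ring.
Set Implicit Arguments. Unset Strict Implicit. Unset Printing Implicit Defensive.
Import Order.TTheory GRing.Theory Num.Theory.
Local Open Scope ring_scope.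

(* phi(x) = (c1^T x)(c2^T x).  Writing c1 = E y with y = E^-1 c1, the
   Cauchy-Schwarz inequality for the inner product x^T E y gives
   (c1^T x)^2 = (y^T E x)^2 <= (y^T E y)(x^T E x) <= (c1^T E^-1 c1) alpha^2 on the
   ellipsoid; multiplying by (c2^T x)^2 = x^T c2 c2^T x yields phi(x)^2 <= alpha^2 x^T W1 x.
   W2 is the same bound with c1 and c2 exchanged, under which phi is symmetric. *)

Lemma mulmx1x1E (R : pzSemiRingType) (A B : 'M[R]_1) : (A *m B) 0 0 = A 0 0 * B 0 0.
Proof. by rewrite mxE big_ord1. Qed.

Section QuadraticForm.
Variables (R : comPzRingType) (n : nat).
Implicit Types (x y u v : 'cV[R]_n) (A B : 'M[R]_n).

Lemma qformDl u v A y : qform (u + v) A y = qform u A y + qform v A y.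
Proof. by rewrite /qform linearD /= !mulmxDl mxE. Qed.

Lemma qformDr x A u v : qform x A (u + v) = qform x A u + qform x A v.
Proof. by rewrite /qform mulmxDr mxE. Qed.

Lemma qformZl (t : R) u A y : qform (t *: u) A y = t * qform u A y.
Proof. by rewrite /qform linearZ /= -!scalemxAl mxE. Qed.

Lemma qformZr (t : R) x A u : qform x A (t *: u) = t * qform x A u.
Proof. by rewrite /qform -scalemxAr mxE. Qed.

Lemma qformDm x A B y : qform x (A + B) y = qform x A y + qform x B y.
Proof. by rewrite /qform mulmxDr mulmxDl mxE. Qed.

Lemma qformZm (t : R) x A y : qform x (t *: A) y = t * qform x A y.
Proof. by rewrite /qform -scalemxAr -scalemxAl mxE. Qed.

Lemma qformC x A y : A^T = A -> qform x A y = qform y A x.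
Proof.
move=> symA; rewrite /qform -[in LHS](trmxK (x^T *m A *m y)) mxE.
by rewrite !trmx_mul trmxK symA mulmxA.
Qed.

Lemma dotmxC u v : (u^T *m v) 0 0 = (v^T *m u) 0 0.
Proof. by rewrite -[in LHS](trmxK (u^T *m v)) mxE trmx_mul trmxK. Qed.

Lemma qform_outer x u v :
  qform x (u *m v^T) x = (u^T *m x) 0 0 * (v^T *m x) 0 0.
Proof. by rewrite /qform mulmxA -mulmxA mulmx1x1E dotmxC. Qed.

Lemma qform_block_diag x (a : R) A (D : 'M[R]_1) :
  ((col_mx x a%:M)^T *m block_mx A 0 0 D *m col_mx x a%:M) 0 0
    = qform x A x + D 0 0 * a ^+ 2.
Proof.
rewrite tr_col_mx mul_row_block mul_row_col !mulmx0 addr0 add0r mxE -/(qform _ _ _).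
rewrite tr_scalar_mx !mulmx1x1E !mxE /= mulr1n.
by congr (_ + _); rewrite mulrAC mulrC expr2.
Qed.

End QuadraticForm.

Section PositiveDefinite.
Variables (R : numFieldType) (n : nat) (E : 'M[R]_n).
Hypothesis posE : posdef E.
Implicit Types (x y c : 'cV[R]_n).

Lemma qform_ge0 x : 0 <= qform x E x.
Proof.
have [->|x_neq0] := eqVneq x 0; first by rewrite /qform mulmx0 mxE.
exact/ltW/posE.2.
Qed.

Lemma qform_Cauchy_Schwarz x y : qform y E x ^+ 2 <= qform y E y * qform x E x.
Proof.
have [->|y_neq0] := eqVneq y 0.
  by rewrite /qform trmx0 !mul0mx mxE expr0n /= mul0r.
have p_gt0 := posE.2 _ y_neq0.
set p := qform y E y; set q := qform x E x; set r := qform y E x.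
(* expand the nonnegativity of the form at the minimiser t = - r / p of t |-> q(t y + x) *)
have := qform_ge0 ((- (r / p)) *: y + x).
rewrite !(qformDl, qformDr, qformZl, qformZr) (qformC x y posE.1) -/p -/q -/r.
have -> : - (r / p) * (- (r / p) * p) + - (r / p) * r + (- (r / p) * r + q)
          = q - r ^+ 2 / p by field; rewrite gt_eqF.
by rewrite subr_ge0 ler_pdivrMr // mulrC.
Qed.

Lemma posdef_unitmx : E \in unitmx.
Proof.
rewrite unitmxE unitfE; apply/negP => /det0P [v v_neq0 vE0].
have : v^T != 0 by rewrite -(inj_eq (@trmx_inj _ _ _)) trmxK trmx0.
by move/posE.2; rewrite /qform trmxK vE0 mul0mx mxE ltxx.
Qed.

Lemma dotmx_invmxE c x : (c^T *m x) 0 0 = qform (invmx E *m c) E x.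
Proof. by rewrite /qform trmx_mul trmx_inv posE.1 mulmxKV ?posdef_unitmx. Qed.

Lemma qform_invmxE c : qform c (invmx E) c = qform (invmx E *m c) E (invmx E *m c).
Proof. by rewrite -dotmx_invmxE /qform mulmxA. Qed.

Lemma dotmx_sqr_le_invmx c x :
  (c^T *m x) 0 0 ^+ 2 <= qform c (invmx E) c * qform x E x.
Proof. by rewrite dotmx_invmxE qform_invmxE; apply: qform_Cauchy_Schwarz. Qed.

End PositiveDefinite.

Lemma phiE (R : numFieldType) n (c1 c2 x : 'cV[R]_n) :
  phi c1 c2 x = (c1^T *m x) 0 0 * (c2^T *m x) 0 0.
Proof.
by rewrite /phi /Qmat qformZm qformDm !qform_outer [X in _ + X]mulrC; field.
Qed.

Lemma phiC (R : fieldType) n (c1 c2 x : 'cV[R]_n) : phi c1 c2 x = phi c2 c1 x.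
Proof. by rewrite /phi /Qmat addrC. Qed.

Lemma phi_sqr_le_W1 (R : realFieldType) n (E : 'M[R]_n) alpha (c1 c2 x : 'cV[R]_n) :
  posdef E -> x \in ellipsoid E alpha ->
  phi c1 c2 x ^+ 2 <= alpha ^+ 2 * qform x (W1 E c1 c2) x.
Proof.
move=> posE x_in.
rewrite phiE /W1 qformZm qform_outer -expr2 exprMn [leRHS]mulrA.
apply: ler_wpM2r; first exact: sqr_ge0.
rewrite [leRHS]mulrC; apply: le_trans (dotmx_sqr_le_invmx posE c1 x) _.
by apply: ler_wpM2l x_in; rewrite qform_invmxE ?qform_ge0.
Qed.

Theorem lemma4 (R : realType) (n : nat) (E : 'M[R]_n) (alpha : R)
    (c1 c2 : 'cV[R]_n) (W : 'M[R]_n) :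
  posdef E -> 0 < alpha ->
  (W = W1 E c1 c2 \/ W = W2 E c1 c2) ->
  forall x : 'cV[R]_n, x \in ellipsoid E alpha ->
    0 <= ((col_mx x (phi c1 c2 x)%:M)^T
           *m block_mx (alpha ^+ 2 *: W) 0 0 (-1 : 'M[R]_1)
           *m col_mx x (phi c1 c2 x)%:M) 0 0.
Proof.
move=> posE _ W_def x x_in.
rewrite qform_block_diag qformZm !mxE /= mulN1r subr_ge0.
case: W_def => ->; first exact: phi_sqr_le_W1.
by rewrite phiC; exact: phi_sqr_le_W1.
Qed.
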